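(* Fix $s,b\ge1$, let $\{a_i\}$ be the $(s,b)$-Generacci sequence, and for $n,k\ge0$ let $q_{n,k}$ be the number of $m\in[0,a_{nb+1})$ whose legal decomposition has exactly $k$ summands (so $q_{n,0}=1$, $q_{n,1}=nb$, and $q_{n,k}=0$ if $n<s+1$ and $k\ge2$). If $n\ge s+1$ and $k\le\frac{n+s}{s+1}$ then \[q_{n,k}=b\,q_{n-(s+1),k-1}+q_{n-1,k},\] and if $k>\frac{n+s}{s+1}$ then $q_{n,k}=0$. Moreover, with $n_*=\lceil\frac{n+s}{s+1}\rceil$, the generating function $H(x,y)=\sum_{n\ge0}\sum_{k=0}^{n_*}q_{n,k}x^ny^k$ satisfies \[H(x,y)=\frac{1+by(x+x^2+\dots+x^s)}{1-x-byx^{s+1}}.\]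
   Context: Fix integers $s,b\ge1$. For an increasing sequence of positive integers $\{a_i\}_{i\ge1}$ define bins $\mathcal{B}_n=\{a_{b(n-1)+1},\dots,a_{bn}\}$ for $n\ge1$, $\mathcal{B}_j=\emptyset$ for $j\le 0$. A decomposition $m=a_{\ell_1}+\dots+a_{\ell_k}$ with $a_{\ell_1}>\dots>a_{\ell_k}$ is an $(s,b)$-Generacci legal decomposition if $\{a_{\ell_i},a_{\ell_{i+1}}\}\not\subset\mathcal{B}_{j-s}\cup\dots\cup\mathcal{B}_j$ for all $i,j$. The $(s,b)$-Generacci sequence is the increasing sequence in which each $a_i$ is the smallest positive integer with no legal decomposition using $a_1,\dots,a_{i-1}$; every nonnegative integer has a unique legal decomposition ($0$ being the empty sum). *)

From mathcomp Require Import all_boot all_algebra.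
From mathcomp Require Import boolp.
Set Implicit Arguments. Unset Strict Implicit. Unset Printing Implicit Defensive.
Import GRing.Theory.

(* Sequences a : nat -> nat are indexed from 1 (the value a 0 is irrelevant). *)

(* bin number of index l >= 1: a_l lies in B_(bin b l) *)
Definition bin (b l : nat) : nat := (l - 1) %/ b + 1.

(* a_l lies in B_(j-s) U ... U B_j  (bins with index <= 0 are empty) *)
Definition in_window (s b j l : nat) : Prop := j - s <= bin b l <= j.

(* L = [:: l_1; ...; l_k] is the index list of a decomposition
   a_(l_1) + ... + a_(l_k) with a_(l_1) > ... > a_(l_k), and it is legal:
   no two consecutive summands lie in a window of s+1 consecutive bins. *)
Definition legal (s b : nat) (a : nat -> nat) (L : seq nat) : Prop :=
  all (fun l => 0 < l) L /\
  sorted (fun x y => a y < a x) L /\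
  (forall i, i.+1 < size L -> forall j : nat,
      ~ (in_window s b j (nth 0 L i) /\ in_window s b j (nth 0 L i.+1))).

Definition has_legal_dec_upto (s b : nat) (a : nat -> nat) (N m : nat) : Prop :=
  exists L : seq nat, all (fun l => l <= N) L /\ legal s b a L /\
    \sum_(l <- L) a l = m.

Definition is_generacci (s b : nat) (a : nat -> nat) : Prop :=
  (forall i, 0 < i -> a i < a i.+1) /\
  (forall i, 0 < i ->
     [/\ 0 < a i,
         ~ has_legal_dec_upto s b a i.-1 (a i)
       & forall m, 0 < m < a i -> has_legal_dec_upto s b a i.-1 m]).

Definition dec_with_k (s b : nat) (a : nat -> nat) (m k : nat) : Prop :=
  exists L : seq nat, legal s b a L /\ \sum_(l <- L) a l = m /\ size L = k.

Definition q (s b : nat) (a : nat -> nat) (n k : nat) : nat :=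
  count (fun m => `[< dec_with_k s b a m k >]) (iota 0 (a (n * b + 1))).

(* n_* = ceil((n+s)/(s+1)) *)
Definition nstar (s n : nat) : nat := (n + s + s) %/ s.+1.

(* Bivariate formal power series over int: F n k = coefficient of x^n y^k. *)
Definition fps := nat -> nat -> int.
Local Open Scope ring_scope.
Definition fps_const (c : int) : fps := fun n k => if (n == 0)%N && (k == 0)%N then c else 0.
Definition fps_X : fps := fun n k => if (n == 1)%N && (k == 0)%N then 1 else 0.
Definition fps_Y : fps := fun n k => if (n == 0)%N && (k == 1)%N then 1 else 0.
Definition fps_add (F G : fps) : fps := fun n k => F n k + G n k.
Definition fps_opp (F : fps) : fps := fun n k => - F n k.
Definition fps_mul (F G : fps) : fps := fun n k =>
  \sum_(i < n.+1) \sum_(j < k.+1) F i j * G (n - i)%N (k - j)%N.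
Definition fps_pow (F : fps) (e : nat) : fps := iter e (fps_mul F) (fps_const 1).

Definition gfH (s b : nat) (a : nat -> nat) : fps := fun n k =>
  if (k <= nstar s n)%N then (q s b a n k)%:Z else 0.

Definition gf_den (s b : nat) : fps :=
  fps_add (fps_add (fps_const 1) (fps_opp fps_X))
          (fps_opp (fps_mul (fps_const b%:Z) (fps_mul fps_Y (fps_pow fps_X s.+1)))).

Definition gf_num (s b : nat) : fps :=
  fps_add (fps_const 1)
    (fps_mul (fps_const b%:Z)
       (fps_mul fps_Y (foldr fps_add (fps_const 0) [seq fps_pow fps_X i | i <- iota 1 s]))).

From mathcomp Require Import all_boot all_algebra.
From mathcomp Require Import zify boolp.
Set Implicit Arguments. Unset Strict Implicit. Unset Printing Implicit Defensive.

(* An index h may follow l in a legal decomposition exactly when h <= f(l), the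
   last index of the bin lying s+1 bins below that of l.  Hence legal sums with
   indices at most N stay below a_(N+1), and the minimality of a_(N+1) forces
   a_(N+1) = a_N + a_(f(N)+1); both facts are proved together by strong induction
   on N.  So the m in [a_N, a_(N+1)) are exactly the a_N + m' with
   m' < a_(f(N)+1), and their legal decompositions are those of m' headed by a_N.
   As f equals (n-s-1)b on all b indices of bin n, summing over that bin gives
   q_(n,k) = q_(n-1,k) + b q_(n-s-1,k-1); the bounds on k and the generating
   function are read off this recurrence. *)

(* Zero, so that nothing may follow l, when l lies in one of the first s+1 bins. *)
Definition max_follower (s b l : nat) : nat := (bin b l - s.+1) * b.

Lemma bin_gt0 b l : 0 < bin b l.
Proof. by rewrite /bin addn1. Qed.

Lemma bin_leq_mul b h c : 0 < b -> 0 < h -> (bin b h <= c) = (h <= c * b).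
Proof. by move=> b_gt0; case: h => // h _; rewrite /bin addn1 ltn_divLR // subn1. Qed.

Lemma leq_bin b : {homo bin b : h l / h <= l}.
Proof. by move=> h l hl; rewrite /bin leq_add2r leq_div2r // leq_sub2r. Qed.

Lemma max_follower_lt s b l : 0 < b -> 0 < l -> max_follower s b l < l.
Proof. by move=> b_gt0 l_gt0; rewrite ltnNge -bin_leq_mul //; have := bin_gt0 b l; lia. Qed.

Lemma max_follower_block s b n j : 0 < b -> j < b ->
  max_follower s b (n * b + j.+1) = (n.+1 - s.+1) * b.
Proof.
move=> b_gt0 jb; rewrite /max_follower /bin addn1 addnS subn1 /=.
by rewrite divnMDl // divn_small // addn0.
Qed.

Lemma legal_nil s b a : legal s b a [::].
Proof. by split=> //; split=> // i. Qed.

Section Generacci.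
Variables (s b : nat) (a : nat -> nat).
Hypotheses (b_gt0 : 0 < b) (Ga : is_generacci s b a).

Lemma generacci_ltE : {in [pred i | 0 < i] &, {mono a : i j / i < j}}.
Proof.
apply/leqW_mono_in/leq_mono_in.
apply: (@homo_ltn_in _ _ _ (fun x y => x < y)) => [y x z|i j|i i_gt0 _].
- exact: ltn_trans.
- by rewrite !inE => i_gt0 _ k /andP[ik _]; apply: ltn_trans ik.
- exact: Ga.1 i i_gt0.
Qed.

Lemma generacci_gt0 i : 0 < i -> 0 < a i.
Proof. by move=> /Ga.2[]. Qed.

Lemma generacci1 : a 1 = 1.
Proof.
have [a1_gt0 _ small] := Ga.2 1 isT.
case: (ltngtP (a 1) 1) => // a1_gt1; first lia.
have [[|l L] [allL [[posL _] sumL]]] := small 1 (a1_gt1 : 0 < 1 < a 1).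
  by rewrite big_nil in sumL.
by case/andP: allL; case/andP: posL => /= l_gt0 _; rewrite leqNgt l_gt0.
Qed.

Lemma leq_max_follower h l : 0 < h -> 0 < l ->
  (h <= max_follower s b l) <->
  (a h < a l /\ forall j, ~ (in_window s b j l /\ in_window s b j h)).
Proof.
move=> h_gt0 l_gt0; rewrite /max_follower -bin_leq_mul // generacci_ltE //.
have bh_gt0 := bin_gt0 b h; split=> [far | [hl apart]].
  split=> [|j []]; last by rewrite /in_window; lia.
  by rewrite ltnNge; apply/negP => /(leq_bin b); lia.
have bin_hl := leq_bin b (ltnW hl).
case: (leqP (bin b l - s) (bin b h)) => near; last lia.
by exfalso; apply: (apart (bin b l)); rewrite /in_window; lia.
Qed.

Lemma legal_cons l T : legal s b a (l :: T) <->
  [/\ 0 < l, legal s b a T & all (fun h => h <= max_follower s b l) T].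
Proof.
split.
  case=> /= /andP[l_gt0 posT] [pathT apart].
  have legT : legal s b a T.
    by split=> //; split=> [|i]; [exact: path_sorted pathT | exact: apart i.+1].
  split=> //; case: T posT pathT apart {legT} => //= h T.
  move=> /andP[h_gt0 posT] /andP[ahl pathT] apart.
  have h_far : h <= max_follower s b l.
    by apply/(leq_max_follower h_gt0 l_gt0); split=> // j; apply: (apart 0).
  rewrite h_far; apply/allP => y yT.
  have := allP (order_path_min (fun _ _ _ r1 r2 => ltn_trans r2 r1) pathT) y yT.
  have y_gt0 : 0 < y := allP posT y yT.
  rewrite generacci_ltE ?inE // => yh.
  exact: leq_trans (ltnW yh) h_far.
case=> l_gt0 [posT [sortT apart]] farT; split; first by rewrite /= l_gt0.
case: T posT sortT apart farT => [_ _ _ _|h T /= /andP[h_gt0 _] sortT apart /andP[h_far _]].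
  by split=> // -[].
have [ahl l_h_apart] := (leq_max_follower h_gt0 l_gt0).1 h_far.
by split=> [|[|i] //]; rewrite /= ?ahl //; apply: apart.
Qed.

Lemma legal_sum_lt_rec N : 0 < N ->
  (forall n, n < N -> forall L, all (fun l => l <= n) L -> legal s b a L ->
     \sum_(l <- L) a l < a n.+1) ->
  forall L, all (fun l => l <= N) L -> legal s b a L ->
  \sum_(l <- L) a l < a N + a (max_follower s b N).+1.
Proof.
move=> N_gt0 IH [|l T] /=; first by rewrite big_nil; have := generacci_gt0 N_gt0; lia.
move=> /andP[lN _] legL; have [l_gt0 legT farT] := (legal_cons l T).1 legL.
have l_far := max_follower_lt s b_gt0 l_gt0.
case: (ltngtP l N) lN => // [lN _ | lN _].
  have : \sum_(x <- l :: T) a x < a N.-1.+1.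
    apply: (IH N.-1) legL; first by rewrite prednK.
    by rewrite /= -ltnS prednK // lN; apply: sub_all farT => y /=; lia.
  by rewrite prednK //; lia.
by subst l; rewrite big_cons ltn_add2l; apply: (IH _ l_far _ farT legT).
Qed.

Lemma has_legal_dec_widen M N m : M <= N ->
  has_legal_dec_upto s b a M m -> has_legal_dec_upto s b a N m.
Proof.
move=> MN [L [allL legL]]; exists L; split=> //.
by apply: sub_all allL => l /= /leq_trans; apply.
Qed.

Lemma has_legal_dec_lt i m : 0 < i -> m < a i -> has_legal_dec_upto s b a i.-1 m.
Proof.
case: m => [|m] i_gt0 mi; last by have [_ _] := Ga.2 i i_gt0; apply.
by exists [::]; rewrite big_nil; split=> //; split=> //; exact: legal_nil.
Qed.

Lemma has_legal_dec_lt_rec N : 0 < N ->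
  forall m, m < a N + a (max_follower s b N).+1 -> has_legal_dec_upto s b a N m.
Proof.
move=> N_gt0 m mM; have N_far := max_follower_lt s b_gt0 N_gt0.
case: (ltnP m (a N)) => mN.
  by apply: has_legal_dec_widen (has_legal_dec_lt N_gt0 mN); apply: leq_pred.
have rest_lt : m - a N < a (max_follower s b N).+1 by lia.
have [T [farT [legT sumT]]] := has_legal_dec_lt (ltn0Sn _) rest_lt.
exists (N :: T); split; [|split].
- by rewrite /= leqnn; apply: sub_all farT => y /= /leq_trans; apply; apply: ltnW.
- by apply/legal_cons.
- by rewrite big_cons sumT subnKC.
Qed.

Lemma generacci_next_eq N M :
  (forall L, all (fun l => l <= N) L -> legal s b a L -> \sum_(l <- L) a l < M) ->
  (forall m, m < M -> has_legal_dec_upto s b a N m) -> a N.+1 = M.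
Proof.
move=> sum_lt rep; have [_ not_rep rep_lt] := Ga.2 N.+1 isT.
case: (ltngtP (a N.+1) M) => // [/rep // | Ma].
have M_range : 0 < M < a N.+1.
  by rewrite Ma andbT; have := sum_lt [::] isT (legal_nil s b a); rewrite big_nil.
have [L [allL [legL sumL]]] := rep_lt M M_range.
by have := sum_lt L allL legL; rewrite sumL ltnn.
Qed.

Lemma legal_sum_lt N L : all (fun l => l <= N) L -> legal s b a L ->
  \sum_(l <- L) a l < a N.+1.
Proof.
elim/ltn_ind: N L => -[_ [|l L] /= | N IH L].
- by rewrite big_nil generacci1.
- by case/andP=> l_le0 _ [/andP[/= l_gt0 _] _]; rewrite leqNgt l_gt0 in l_le0.
rewrite (generacci_next_eq (legal_sum_lt_rec _ IH) (has_legal_dec_lt_rec (ltn0Sn N))) //.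
exact: legal_sum_lt_rec.
Qed.

Lemma generacci_rec N : 0 < N -> a N.+1 = a N + a (max_follower s b N).+1.
Proof.
move=> N_gt0; apply: generacci_next_eq; last exact: has_legal_dec_lt_rec.
by apply: legal_sum_lt_rec => // n _ L; apply: legal_sum_lt.
Qed.

Lemma legal_all_leq N L : legal s b a L -> \sum_(l <- L) a l < a N.+1 ->
  all (fun l => l <= N) L.
Proof.
move=> [posL _] sumL; apply/allP => l lL; have l_gt0 : 0 < l := allP posL l lL.
rewrite -ltnS -generacci_ltE ?inE //; apply: leq_ltn_trans sumL.
by rewrite (big_rem l lL) leq_addr.
Qed.

Lemma dec_with_k_add N m k : 0 < N -> m < a (max_follower s b N).+1 ->
  dec_with_k s b a (a N + m) k <->
  (if k is k'.+1 then dec_with_k s b a m k' else False).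
Proof.
move=> N_gt0 m_lt; split.
  case=> -[|l T] [legL [sumL <-]].
    by move: sumL; rewrite big_nil; have := generacci_gt0 N_gt0; lia.
  have [l_gt0 legT farT] := (legal_cons l T).1 legL.
  have l_le_N : l <= N.
    have sum_lt : \sum_(x <- l :: T) a x < a N.+1.
      by rewrite sumL generacci_rec // ltn_add2l.
    by have /andP[] := legal_all_leq legL sum_lt.
  have N_le_l : N <= l.
    have : \sum_(x <- l :: T) a x < a l.+1.
      apply: legal_sum_lt legL; rewrite /= leqnn.
      by apply: sub_all farT => y /= /leq_trans; apply; exact/ltnW/max_follower_lt.
    by rewrite sumL => /(leq_ltn_trans (leq_addr m _)); rewrite generacci_ltE.
  have lN : l = N by apply/eqP; rewrite eqn_leq l_le_N.
  by subst l; exists T; rewrite big_cons in sumL; split=> //; split=> //; lia.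
case: k => [//|k] [T [legT [sumT <-]]].
exists (N :: T); split; last by rewrite big_cons sumT.
by apply/legal_cons; split=> //; apply: legal_all_leq legT _; rewrite sumT.
Qed.

Definition dec_count N k := count (fun m => `[< dec_with_k s b a m k >]) (iota 0 (a N.+1)).

Lemma dec_count_rec N k : 0 < N ->
  dec_count N k =
  dec_count N.-1 k + (if k is k'.+1 then dec_count (max_follower s b N) k' else 0).
Proof.
move=> N_gt0; rewrite /dec_count generacci_rec // iotaD count_cat prednK //.
congr (_ + _); rewrite add0n -[a N]addn0 iotaDl count_map.
case: k => [|k].
  rewrite (@eq_in_count _ _ pred0) ?count_pred0 // => m.
  by rewrite mem_iota /= => m_lt; apply/asboolP => /(dec_with_k_add _ N_gt0 m_lt).
apply: eq_in_count => m; rewrite mem_iota /= => m_lt.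
exact/asbool_equiv_eq/dec_with_k_add.
Qed.

Lemma dec_count0 k : dec_count 0 k = (k == 0).
Proof.
rewrite /dec_count generacci1 /=; case: k => [|k] /=.
  by rewrite asboolT //; exists [::]; rewrite big_nil; split=> //; exact: legal_nil.
rewrite asboolF // => -[[|l L] [[posL _] [sumL _]]] //.
have /andP[l_gt0 _] := posL; move: sumL; rewrite big_cons; have := generacci_gt0 l_gt0; lia.
Qed.

Lemma q_dec_count n k : q s b a n k = dec_count (n * b) k.
Proof. by rewrite /q /dec_count addn1. Qed.

Lemma dec_count_block n k j : j <= b ->
  dec_count (n * b + j) k =
  dec_count (n * b) k + j * (if k is k'.+1 then dec_count ((n.+1 - s.+1) * b) k' else 0).
Proof.
elim: j => [|j IH] jb; first by rewrite addn0 mul0n addn0.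
rewrite dec_count_rec ?addnS //= -addnS max_follower_block // IH ?(ltnW jb) //.
by case: k {IH} => [|k]; rewrite ?muln0 //; lia.
Qed.

Lemma q_rec n k : 0 < n ->
  q s b a n k = (if k is k'.+1 then b * q s b a (n - s.+1) k' else 0) + q s b a n.-1 k.
Proof.
case: n => // n _; rewrite !q_dec_count mulSn addnC dec_count_block //.
by case: k => [|k]; rewrite ?muln0 ?q_dec_count addnC.
Qed.

Lemma q0 k : q s b a 0 k = (k == 0).
Proof. by rewrite q_dec_count dec_count0. Qed.

Lemma q_k0 n : q s b a n 0 = 1.
Proof. by elim: n => [|n IH]; rewrite ?q0 // q_rec. Qed.

Lemma q_k1 n : q s b a n 1 = n * b.
Proof. by elim: n => [|n IH]; rewrite ?q0 ?mul0n // q_rec //= IH q_k0 muln1 mulSn. Qed.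

Lemma q_small n k : n < s.+1 -> 2 <= k -> q s b a n k = 0.
Proof.
elim: n => [|n IH] ns k2; first by rewrite q0; case: k k2.
rewrite q_rec //= IH ?(ltnW ns) // addn0 (_ : n.+1 - s.+1 = 0); last lia.
by case: k k2 {IH} => [|[|k]] //= _; rewrite q0 muln0.
Qed.

Lemma q_big n k : n + s < k * s.+1 -> q s b a n k = 0.
Proof.
elim/ltn_ind: n k => -[_ [|k] // | n IH k nk]; first by rewrite q0.
rewrite q_rec //= IH //; last lia.
case: k nk => [|k] // nk; rewrite IH ?muln0 //; first lia.
by move: nk; rewrite mulSn; case: k => [|k]; rewrite ?mulSn; lia.
Qed.
End Generacci.

Section FormalPowerSeries.
Import GRing.Theory.
Local Open Scope ring_scope.

Lemma sum_ord_if_eq n i0 (F : nat -> int) :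
  \sum_(i < n) (if (i : nat) == i0 then F i else 0) = if (i0 < n)%N then F i0 else 0.
Proof. by rewrite -big_mkcond big_ord1_eq. Qed.

Lemma fps_mul_monomial (F G : fps) i0 j0 c :
  (forall i j, F i j = if (i == i0) && (j == j0) then c else 0) ->
  forall n k, fps_mul F G n k =
  if (i0 <= n)%N && (j0 <= k)%N then c * G (n - i0)%N (k - j0)%N else 0.
Proof.
move=> Fmon n k; pose H i := if (j0 <= k)%N then c * G (n - i)%N (k - j0)%N else 0.
rewrite if_and -[RHS]/(if (i0 < n.+1)%N then H i0 else 0) -sum_ord_if_eq /fps_mul.
apply: eq_bigr => i _; case: eqP => [ii0|ne]; last first.
  by rewrite big1 // => j _; rewrite Fmon; case: eqP; rewrite ?mul0r.
rewrite /H -ltnS -(sum_ord_if_eq _ _ (fun j => c * G (n - i)%N (k - j)%N)).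
by apply: eq_bigr => j _; rewrite Fmon ii0 eqxx; case: eqP; rewrite ?mul0r.
Qed.

Lemma fps_mul_addl (F1 F2 G : fps) n k :
  fps_mul (fps_add F1 F2) G n k = fps_mul F1 G n k + fps_mul F2 G n k.
Proof.
rewrite /fps_mul -big_split; apply: eq_bigr => i _; rewrite -big_split.
by apply: eq_bigr => j _; rewrite /fps_add mulrDl.
Qed.

Lemma fps_mul_oppl (F G : fps) n k : fps_mul (fps_opp F) G n k = - fps_mul F G n k.
Proof.
rewrite /fps_mul -sumrN; apply: eq_bigr => i _; rewrite -sumrN.
by apply: eq_bigr => j _; rewrite /fps_opp mulNr.
Qed.

Lemma fps_mul_constl c (G : fps) n k : fps_mul (fps_const c) G n k = c * G n k.
Proof. by rewrite (fps_mul_monomial _ _ (i0 := 0) (j0 := 0) (c := c)) // !subn0. Qed.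

Lemma fps_mul_Xl (G : fps) n k :
  fps_mul fps_X G n k = if (1 <= n)%N then G (n - 1)%N k else 0.
Proof.
by rewrite (fps_mul_monomial _ _ (i0 := 1) (j0 := 0) (c := 1)) // subn0 andbT mul1r.
Qed.

Lemma fps_mul_Yl (G : fps) n k :
  fps_mul fps_Y G n k = if (1 <= k)%N then G n (k - 1)%N else 0.
Proof. by rewrite (fps_mul_monomial _ _ (i0 := 0) (j0 := 1) (c := 1)) // subn0 mul1r. Qed.

Lemma coef_powX e n k : fps_pow fps_X e n k = if (n == e) && (k == 0%N) then 1 else 0.
Proof.
elim: e n k => [//|e IH] [|n] k; rewrite /fps_pow iterS -/(fps_pow fps_X e) fps_mul_Xl //.
by rewrite IH subn1.
Qed.

Lemma coef_cYXn c e n k :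
  fps_mul (fps_const c) (fps_mul fps_Y (fps_pow fps_X e)) n k =
  if (n == e) && (k == 1%N) then c else 0.
Proof.
rewrite fps_mul_constl fps_mul_Yl coef_powX.
by case: k => [|[|k]] /=; rewrite ?andbF ?mulr0 //; case: (n == e); rewrite ?mulr1 ?mulr0.
Qed.

Lemma coef_sum_powX m t n k :
  foldr fps_add (fps_const 0) [seq fps_pow fps_X l | l <- iota m t] n k =
  if (k == 0%N) && (m <= n < m + t)%N then 1 else 0.
Proof.
elim: t m => [|t IH] m /=.
  by rewrite /fps_const addn0 (_ : (m <= n < m)%N = false) ?andbF; [case: (_ && _) | lia].
rewrite /fps_add IH coef_powX; case: (k == 0%N); rewrite ?andbF ?addr0 //=.
by case: (ltngtP n m) => [//|_|->]; rewrite ?addr0 ?add0r addnS // ltnS leq_addr.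
Qed.

Lemma gfH_q s b a n k : (0 < b)%N -> is_generacci s b a ->
  gfH s b a n k = (q s b a n k)%:Z.
Proof.
move=> b_gt0 Ga; rewrite /gfH; case: leqP => // k_big.
by rewrite q_big //; move: k_big; rewrite /nstar ltn_divLR //; lia.
Qed.

Lemma gf_den_mul_gfH s b a : (0 < b)%N -> is_generacci s b a ->
  fps_mul (gf_den s b) (gfH s b a) = gf_num s b.
Proof.
move=> b_gt0 Ga; apply/funext => n; apply/funext => k.
(* Coefficientwise this is q_rec; for n <= s, where n - s - 1 truncates to 0, the
   leftover terms form the numerator. *)
rewrite /gf_den !fps_mul_addl !fps_mul_oppl fps_mul_constl fps_mul_Xl mul1r.
rewrite (fps_mul_monomial _ (coef_cYXn _ _)).
rewrite /gf_num /fps_add fps_mul_constl fps_mul_Yl coef_sum_powX /fps_const !gfH_q //.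
case: n => [|n].
  by rewrite q0 //; case: k => [|k] /=; rewrite ?andbF ?subr0 ?mulr0 ?addr0.
rewrite q_rec // subn1 /=.
case: k => [|k] /=; first by rewrite add0n subrr ltnn andbF subr0 mulr0 addr0.
rewrite PoszD PoszM addrK subn1 /= ltn0Sn andbT add0r.
case: (leqP s.+1 n.+1) => c /=; first by rewrite andbF mulr0 subrr.
rewrite subr0 andbT (_ : (n.+1 - s.+1)%N = 0%N); last lia.
by rewrite q0 //; case: k => [|k] /=; rewrite ?mulr0 ?mulr1.
Qed.
End FormalPowerSeries.

Theorem propositionA1 (s b : nat) (a : nat -> nat) :
  (1 <= s)%N -> (1 <= b)%N -> is_generacci s b a ->
  (forall n, q s b a n 0 = 1%N) /\
      (forall n, q s b a n 1 = (n * b)%N) /\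
      (forall n k, (n < s.+1)%N -> (2 <= k)%N -> q s b a n k = 0%N) /\
      (forall n k, (s.+1 <= n)%N -> (k * s.+1 <= n + s)%N ->
         q s b a n k =
           ((if k is k'.+1 then b * q s b a (n - s.+1) k' else 0)
            + q s b a n.-1 k)%N) /\
      (forall n k, (n + s < k * s.+1)%N -> q s b a n k = 0%N) /\
    fps_mul (gf_den s b) (gfH s b a) = gf_num s b.
Proof.
move=> _ b_gt0 Ga; split; first exact: q_k0.
split; first exact: q_k1.
split; first exact: q_small.
split; first by move=> n k ns _; apply: q_rec => //; apply: leq_trans ns.
split; first exact: q_big.
exact: gf_den_mul_gfH.
Qed.
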